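(* Let $M=\neg A_1\lor\dots\lor\neg A_n\lor D$ be a flat clause ($D$ positive), and for $i=1,\dots,n$ let $C_i=B_i\lor D_i$ be loosely guarded clauses with $B_i$ a positive literal, such that $M,C_1,\dots,C_n$ are pairwise variable-disjoint and, for each $i$, either $C_i$ is ground or $B_i$ contains a compound term. Let $\sigma'$ be a simultaneous most general unifier with $B_i\sigma'=A_i\sigma'$ for all $1\le i\le n$, and call a variable $x$ of $\neg A_1\lor\dots\lor\neg A_n$ a top variable if $\mathrm{Dep}(x\sigma')\ge\mathrm{Dep}(y\sigma')$ for every variable $y$ of $\neg A_1\lor\dots\lor\neg A_n$. Then: (1) For every $i$ such that $A_i$ contains a top variable, every top variable occurring in $A_i$ at argument position $k$ is matched by a constant or a compound term at position $k$ of $B_i$, and every non-top variable occurring in $A_i$ at position $k$ is matched by a constant or a variable at position $k$ of $B_i$. (2) If some top variable occurring in some $A_i$ is matched by a constant in $B_i$, then every variable of $\neg A_1\lor\dots\lor\neg A_n$ is a top variable and $\sigma'$ maps each such variable to a constant.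
   Context: A compound term is a term that is neither a variable nor a constant; $\mathrm{Var}(E)$ is the set of variables of $E$. Term depth: $\mathrm{Dep}(t)=0$ if $t$ is a variable or constant, and $\mathrm{Dep}(f(u_1,\dots,u_n))=1+\max_i\mathrm{Dep}(u_i)$. A literal is flat if every argument is a variable or constant; simple if every argument is a variable, a constant, or $f(u_1,\dots,u_n)$ with each $u_i$ a variable or constant; a clause is flat/simple if all its literals are. A clause $C$ is covering if every compound term $t$ in $C$ satisfies $\mathrm{Var}(t)=\mathrm{Var}(C)$. A loosely guarded clause is an equality-free, simple, covering clause $C$ that is either ground or contains a set $\mathcal G$ of negative flat literals with $\mathrm{Var}(\mathcal G)=\mathrm{Var}(C)$ such that every pair of variables of $C$ co-occurs in some literal of $\mathcal G$ (guarded clauses are special cases). For literals $A(s_1,\dots,s_k)$ and $B(r_1,\dots,r_k)$ being unified, the term $s_j$ is said to be matched by $r_j$. *)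

From Stdlib Require Import List Arith.
Import ListNotations.

Inductive term : Type :=
| Var : nat -> term
| Fn  : nat -> list term -> term.

Definition is_var (t : term) : Prop := exists x, t = Var x.
Definition is_const (t : term) : Prop := exists c, t = Fn c [].
Definition is_compound (t : term) : Prop := ~ is_var t /\ ~ is_const t.

Fixpoint depth (t : term) : nat :=
  match t with
  | Var _ => 0
  | Fn _ [] => 0
  | Fn _ l => S (fold_right Nat.max 0 (map depth l))
  end.

Inductive subterm (u : term) : term -> Prop :=
| subterm_refl : subterm u u
| subterm_arg : forall f l a, In a l -> subterm u a -> subterm u (Fn f l).

Definition occurs (x : nat) (t : term) : Prop := subterm (Var x) t.

(* Atoms: predicate symbol with argument list. Literals: sign (true = positive)
   and an atom.  The language has no equality predicate, so every clause is
   equality-free. *)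
Record atom : Type := mkAtom { pred_sym : nat; args : list term }.
Definition literal : Type := (bool * atom)%type.
Definition clause : Type := list literal.

Definition occurs_atom (x : nat) (A : atom) : Prop :=
  exists t, In t (args A) /\ occurs x t.
Definition occurs_lit (x : nat) (L : literal) : Prop := occurs_atom x (snd L).
Definition occurs_clause (x : nat) (C : clause) : Prop :=
  exists L, In L C /\ occurs_lit x L.

Definition term_in_clause (t : term) (C : clause) : Prop :=
  exists L u, In L C /\ In u (args (snd L)) /\ subterm t u.

Definition ground_clause (C : clause) : Prop := forall x, ~ occurs_clause x C.

Definition flat_atom (A : atom) : Prop :=
  forall t, In t (args A) -> is_var t \/ is_const t.
Definition flat_lit (L : literal) : Prop := flat_atom (snd L).
Definition flat_clause (C : clause) : Prop := forall L, In L C -> flat_lit L.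

Definition simple_term (t : term) : Prop :=
  is_var t \/ is_const t \/
  exists f l, t = Fn f l /\ forall u, In u l -> is_var u \/ is_const u.
Definition simple_lit (L : literal) : Prop :=
  forall t, In t (args (snd L)) -> simple_term t.
Definition simple_clause (C : clause) : Prop := forall L, In L C -> simple_lit L.

Definition covering (C : clause) : Prop :=
  forall t, term_in_clause t C -> is_compound t ->
    forall x, occurs x t <-> occurs_clause x C.

Definition negative_lit (L : literal) : Prop := fst L = false.
Definition positive_lit (L : literal) : Prop := fst L = true.

Definition loosely_guarded (C : clause) : Prop :=
  simple_clause C /\ covering C /\
  (ground_clause C \/
   exists G : list literal,
     (forall L, In L G -> In L C /\ negative_lit L /\ flat_lit L) /\
     (forall x, occurs_clause x G <-> occurs_clause x C) /\
     (forall x y, occurs_clause x C -> occurs_clause y C ->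
        exists L, In L G /\ occurs_lit x L /\ occurs_lit y L)).

Definition subst : Type := nat -> term.

Fixpoint subst_term (s : subst) (t : term) : term :=
  match t with
  | Var x => s x
  | Fn f l => Fn f (map (subst_term s) l)
  end.

Definition subst_atom (s : subst) (A : atom) : atom :=
  mkAtom (pred_sym A) (map (subst_term s) (args A)).

Definition sim_unifier (s : subst) (Bs As : list atom) : Prop :=
  length Bs = length As /\
  forall i B A, nth_error Bs i = Some B -> nth_error As i = Some A ->
    subst_atom s B = subst_atom s A.

Definition sim_mgu (s : subst) (Bs As : list atom) : Prop :=
  sim_unifier s Bs As /\
  forall th, sim_unifier th Bs As ->
    exists tau : subst, forall x, th x = subst_term tau (s x).

Definition neg_part (As : list atom) : clause := map (fun A => (false, A)) As.
Definition pos_part (D : list atom) : clause := map (fun A => (true, A)) D.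

Definition var_of_negs (As : list atom) (x : nat) : Prop :=
  occurs_clause x (neg_part As).

Definition top_var (s : subst) (As : list atom) (x : nat) : Prop :=
  var_of_negs As x /\
  forall y, var_of_negs As y -> depth (s y) <= depth (s x).

Definition var_disjoint (C C' : clause) : Prop :=
  forall x, occurs_clause x C -> occurs_clause x C' -> False.

Definition pairwise_var_disjoint (Cs : list clause) : Prop :=
  forall i j Ci Cj, i <> j -> nth_error Cs i = Some Ci -> nth_error Cs j = Some Cj ->
    var_disjoint Ci Cj.

(* some argument of the atom is compound (equivalently, it contains a compound subterm) *)
Definition has_compound (A : atom) : Prop :=
  exists t, In t (args A) /\ is_compound t.

From Stdlib Require Import List Arith Lia.
Import ListNotations.

(* Since M is flat, each argument of B_i is unified with a variable or a
   constant of A_i.  In a loosely guarded clause every variable occurs in every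
   compound term and compound terms are simple, so under any substitution a
   compound argument is at least as deep as every argument of the clause, and
   strictly deeper than a variable.  Hence a variable of A_i opposite a compound
   argument is at least as deep as the top variable of A_i, so it is top itself;
   and a top variable opposite a variable would be strictly deeper than itself
   unless B_i has no compound argument, i.e. unless C_i is ground, which the
   variable forbids.  If a top variable is mapped to a constant, all variables
   have depth 0, so no B_j can have a compound argument: every C_j is ground and
   its arguments opposite variables are constants. *)

Lemma depth_Fn_cons f a l : depth (Fn f (a :: l)) = S (list_max (map depth (a :: l))).
Proof. reflexivity. Qed.

Lemma depth_arg_lt f l a : In a l -> depth a < depth (Fn f l).
Proof.
  intros Ha. destruct l as [|b l]; [contradiction|].
  rewrite depth_Fn_cons. apply Nat.lt_succ_r.
  assert (Hmax : Forall (fun k => k <= list_max (map depth (b :: l))) (map depth (b :: l)))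
    by (apply list_max_le; lia).
  rewrite Forall_forall in Hmax. apply Hmax, in_map, Ha.
Qed.

Lemma depth_Fn_le f l n : (forall a, In a l -> depth a < n) -> depth (Fn f l) <= n.
Proof.
  intros Hl. destruct l as [|b l]; [simpl; lia|].
  rewrite depth_Fn_cons. apply Nat.le_succ_l, list_max_lt; [discriminate|].
  apply Forall_forall. intros k Hk. apply in_map_iff in Hk as (a & <- & Ha). auto.
Qed.

Lemma is_compound_Fn_cons f a l : is_compound (Fn f (a :: l)).
Proof. split; intros [c Hc]; discriminate. Qed.

Lemma is_compound_inv t : is_compound t -> exists f a l, t = Fn f (a :: l).
Proof.
  destruct t as [v|f [|a l]]; intros [Hv Hc]; eauto.
  - exfalso; apply Hv; eexists; reflexivity.
  - exfalso; apply Hc; eexists; reflexivity.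
Qed.

Lemma term_trichotomy t : is_var t \/ is_const t \/ is_compound t.
Proof.
  destruct t as [v|f [|a l]]; unfold is_var, is_const; eauto.
  right; right; apply is_compound_Fn_cons.
Qed.

Lemma occurs_flat_term x t : is_var t \/ is_const t -> occurs x t -> t = Var x.
Proof. intros [[v ->]|[c ->]] Hx; inversion Hx; subst; easy. Qed.

Lemma depth_subst_subterm s u t :
  subterm u t -> depth (subst_term s u) <= depth (subst_term s t).
Proof.
  induction 1 as [|f l a Ha _ IH]; [lia|].
  pose proof (depth_arg_lt f _ _ (in_map (subst_term s) _ _ Ha)). cbn [subst_term]. lia.
Qed.

Lemma depth_subst_occurs_lt s y t :
  occurs y t -> t <> Var y -> depth (s y) < depth (subst_term s t).
Proof.
  intros Hy Ht. destruct Hy as [|f l a Ha Hsub]; [congruence|].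
  pose proof (depth_subst_subterm s _ _ Hsub).
  pose proof (depth_arg_lt f _ _ (in_map (subst_term s) _ _ Ha)). cbn [subst_term] in *. lia.
Qed.

Lemma depth_subst_compound_pos s t : is_compound t -> 0 < depth (subst_term s t).
Proof. intros Ht. destruct (is_compound_inv t Ht) as (f & a & l & ->). simpl. lia. Qed.

Lemma depth_subst_simple_le s p q :
  simple_term p -> is_compound q -> (forall v, occurs v p -> occurs v q) ->
  depth (subst_term s p) <= depth (subst_term s q).
Proof.
  intros Hp Hq Hpq.
  assert (Hvar : forall v, occurs v p -> depth (s v) < depth (subst_term s q)).
  { intros v Hv. apply depth_subst_occurs_lt; [auto|].
    intros ->. apply (proj1 Hq). eexists; reflexivity. }
  destruct Hp as [[v ->]|[[c ->]|(f & l & -> & Hl)]].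
  - apply Nat.lt_le_incl, Hvar, subterm_refl.
  - simpl; lia.
  - cbn [subst_term]. apply depth_Fn_le. intros b Hb.
    apply in_map_iff in Hb as (u & <- & Hu).
    destruct (Hl u Hu) as [[v ->]|[c ->]].
    + apply Hvar. eapply subterm_arg; [exact Hu|apply subterm_refl].
    + apply depth_subst_compound_pos, Hq.
Qed.

Section LooselyGuardedDepth.

Variables (s : subst) (C : clause) (L L' : literal) (r : term).
Hypotheses (HC : loosely_guarded C) (HL : In L C) (HL' : In L' C)
  (Hr : In r (args (snd L))) (Hrc : is_compound r).

Lemma loosely_guarded_occurs_compound q v :
  In q (args (snd L')) -> occurs v q -> occurs v r.
Proof.
  intros Hq Hv. destruct HC as (_ & Hcov & _).
  apply (Hcov r); [exists L, r; auto using subterm_refl|exact Hrc|].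
  exists L'. split; [exact HL'|]. exists q; auto.
Qed.

Lemma depth_subst_var_lt_compound w :
  In (Var w) (args (snd L')) -> depth (s w) < depth (subst_term s r).
Proof.
  intros Hw. apply depth_subst_occurs_lt.
  - apply (loosely_guarded_occurs_compound (Var w)); [exact Hw|apply subterm_refl].
  - intros ->. apply (proj1 Hrc). eexists; reflexivity.
Qed.

Lemma depth_subst_arg_le_compound q :
  In q (args (snd L')) -> depth (subst_term s q) <= depth (subst_term s r).
Proof.
  intros Hq. destruct HC as (Hsimple & _).
  apply depth_subst_simple_le; [exact (Hsimple L' HL' q Hq)|exact Hrc|].
  intros v. apply loosely_guarded_occurs_compound, Hq.
Qed.

End LooselyGuardedDepth.

Lemma ground_clause_arg_not_var C L y : ground_clause C -> In L C -> ~ In (Var y) (args (snd L)).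
Proof.
  intros HC HL Hy. apply (HC y). exists L. split; [exact HL|].
  exists (Var y). split; [exact Hy|apply subterm_refl].
Qed.

Lemma subst_atom_eq_nth s A B k a :
  subst_atom s A = subst_atom s B -> nth_error (args A) k = Some a ->
  exists b, nth_error (args B) k = Some b /\ subst_term s b = subst_term s a.
Proof.
  intros E Ha. apply (f_equal (fun A => nth_error (args A) k)) in E. simpl in E.
  rewrite !nth_error_map, Ha in E. destruct (nth_error (args B) k) as [b|]; inversion E; eauto.
Qed.

Lemma flat_atom_matches_compound s A B t :
  flat_atom A -> subst_atom s B = subst_atom s A -> In t (args B) -> is_compound t ->
  exists z, In (Var z) (args A) /\ subst_term s t = s z.
Proof.
  intros HA E Ht Htc. destruct (In_nth_error _ _ Ht) as [k Hk].
  destruct (subst_atom_eq_nth _ _ _ _ _ E Hk) as (a & Ha & Ea).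
  apply nth_error_In in Ha. destruct (HA a Ha) as [[z ->]|[c ->]]; [eauto|].
  destruct (is_compound_inv t Htc) as (f & b & l & ->). discriminate.
Qed.

Lemma nth_error_length_eq {X Y} (l1 : list X) (l2 : list Y) i a :
  length l2 = length l1 -> nth_error l1 i = Some a -> exists b, nth_error l2 i = Some b.
Proof.
  intros E H. destruct (nth_error l2 i) as [b|] eqn:Hb; [eauto|].
  apply nth_error_None in Hb. assert (nth_error l1 i = None) by (apply nth_error_None; lia).
  congruence.
Qed.

Lemma var_of_negs_intro As A z : In A As -> In (Var z) (args A) -> var_of_negs As z.
Proof.
  intros HA Hz. exists (false, A). split; [apply in_map, HA|].
  exists (Var z). split; [exact Hz|apply subterm_refl].
Qed.

Lemma var_of_negs_flat As y :
  (forall A, In A As -> flat_atom A) -> var_of_negs As y ->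
  exists A, In A As /\ In (Var y) (args A).
Proof.
  intros Hflat (L & HL & t & Ht & Hy). apply in_map_iff in HL as (A & <- & HA).
  rewrite <- (occurs_flat_term _ _ (Hflat A HA t Ht) Hy). eauto.
Qed.

Lemma top_var_of_depth_ge s As x x0 :
  top_var s As x0 -> var_of_negs As x -> depth (s x0) <= depth (s x) -> top_var s As x.
Proof. intros [_ Htop] Hx Hle. split; [exact Hx|]. intros y Hy. specialize (Htop y Hy). lia. Qed.

Section Matching.

Variables (s : subst) (As : list atom).
Hypothesis Hflat : forall A, In A As -> flat_atom A.

Lemma top_var_not_matched_by_var A B Di k x y :
  In A As -> loosely_guarded ((true, B) :: Di) ->
  ground_clause ((true, B) :: Di) \/ has_compound B ->
  subst_atom s B = subst_atom s A -> top_var s As x ->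
  nth_error (args A) k = Some (Var x) -> nth_error (args B) k = Some (Var y) -> False.
Proof.
  intros HA HLG Hgc E Hx Hk Hky. apply nth_error_In in Hky as Hy.
  destruct Hgc as [Hg|(t & Ht & Htc)].
  - exact (ground_clause_arg_not_var _ _ y Hg (or_introl eq_refl) Hy).
  - destruct (subst_atom_eq_nth _ _ _ _ _ (eq_sym E) Hk) as (b & Hb & Eb).
    rewrite Hky in Hb. injection Hb as <-. simpl in Eb.
    destruct (flat_atom_matches_compound s A B t (Hflat A HA) E Ht Htc) as (z & Hz & Ez).
    pose proof (depth_subst_var_lt_compound s _ (true, B) (true, B) t HLG
                  (or_introl eq_refl) (or_introl eq_refl) Ht Htc y Hy).
    pose proof (proj2 Hx z (var_of_negs_intro _ _ _ HA Hz)). rewrite Eb, Ez in *. lia.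
Qed.

Lemma compound_match_top_var A B Di k x r :
  In A As -> loosely_guarded ((true, B) :: Di) ->
  subst_atom s B = subst_atom s A ->
  (exists x0, occurs_atom x0 A /\ top_var s As x0) ->
  nth_error (args A) k = Some (Var x) -> nth_error (args B) k = Some r -> is_compound r ->
  top_var s As x.
Proof.
  intros HA HLG E (x0 & (t & Ht & Hx0) & Htop) Hk Hkr Hr.
  rewrite (occurs_flat_term _ _ (Hflat A HA t Ht) Hx0) in Ht.
  destruct (In_nth_error _ _ Ht) as [j Hj].
  destruct (subst_atom_eq_nth _ _ _ _ _ (eq_sym E) Hj) as (q & Hq & Eq).
  destruct (subst_atom_eq_nth _ _ _ _ _ (eq_sym E) Hk) as (r' & Hr' & Er).
  rewrite Hkr in Hr'. injection Hr' as <-.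
  apply (top_var_of_depth_ge _ _ _ x0 Htop); [eapply var_of_negs_intro; eauto using nth_error_In|].
  pose proof (depth_subst_arg_le_compound s _ (true, B) (true, B) r HLG (or_introl eq_refl)
                (or_introl eq_refl) (nth_error_In _ _ Hkr) Hr q (nth_error_In _ _ Hq)).
  simpl in Eq, Er. rewrite Eq, Er in *. exact H.
Qed.

Lemma depth_zero_var_matched_const A B Di y :
  In A As -> (forall z, var_of_negs As z -> depth (s z) = 0) ->
  ground_clause ((true, B) :: Di) \/ has_compound B ->
  subst_atom s B = subst_atom s A -> In (Var y) (args A) -> is_const (s y).
Proof.
  intros HA H0 Hgc E Hy. destruct Hgc as [Hg|(t & Ht & Htc)].
  - destruct (In_nth_error _ _ Hy) as [k Hk].
    destruct (subst_atom_eq_nth _ _ _ _ _ (eq_sym E) Hk) as (r & Hr & Er). simpl in Er.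
    apply nth_error_In in Hr. rewrite <- Er.
    destruct (term_trichotomy r) as [[w ->]|[[c ->]|Hrc]].
    + exfalso. exact (ground_clause_arg_not_var _ _ w Hg (or_introl eq_refl) Hr).
    + eexists; reflexivity.
    + exfalso. pose proof (depth_subst_compound_pos s r Hrc).
      rewrite Er, (H0 y (var_of_negs_intro _ _ _ HA Hy)) in *. lia.
  - exfalso. destruct (flat_atom_matches_compound s A B t (Hflat A HA) E Ht Htc) as (z & Hz & Ez).
    pose proof (depth_subst_compound_pos s t Htc).
    rewrite Ez, (H0 z (var_of_negs_intro _ _ _ HA Hz)) in *. lia.
Qed.

End Matching.
Theorem mainTheorem10
  (As D : list atom) (Bs : list atom) (Ds : list clause) (sigma : subst)
  (HM : flat_clause (neg_part As ++ pos_part D))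
  (HlenB : length Bs = length As) (HlenD : length Ds = length As)
  (HLG : forall i B Di, nth_error Bs i = Some B -> nth_error Ds i = Some Di ->
           loosely_guarded ((true, B) :: Di))
  (Hdisj : pairwise_var_disjoint
             ((neg_part As ++ pos_part D) ::
              map (fun p => (true, fst p) :: snd p) (combine Bs Ds)))
  (Hgc : forall i B Di, nth_error Bs i = Some B -> nth_error Ds i = Some Di ->
           ground_clause ((true, B) :: Di) \/ has_compound B)
  (Hmgu : sim_mgu sigma Bs As) :
  (forall i A B,
     nth_error As i = Some A -> nth_error Bs i = Some B ->
     (exists x, occurs_atom x A /\ top_var sigma As x) ->
     forall k x, nth_error (args A) k = Some (Var x) ->
       (top_var sigma As x ->
          exists r, nth_error (args B) k = Some r /\ (is_const r \/ is_compound r)) /\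
       (~ top_var sigma As x ->
          exists r, nth_error (args B) k = Some r /\ (is_const r \/ is_var r)))
  /\
  ((exists i A B k x r,
      nth_error As i = Some A /\ nth_error Bs i = Some B /\
      nth_error (args A) k = Some (Var x) /\ top_var sigma As x /\
      nth_error (args B) k = Some r /\ is_const r) ->
   forall y, var_of_negs As y -> top_var sigma As y /\ is_const (sigma y)).
Proof.
  destruct Hmgu as [[_ Hu] _].
  assert (Hflat : forall A, In A As -> flat_atom A).
  { intros A HA. apply (HM (false, A)). apply in_or_app; left. apply in_map, HA. }
  split.
  - intros i A B HA HB Hx0 k x Hk.
    destruct (nth_error_length_eq As Ds i A HlenD HA) as [Di HDi].
    pose proof (Hu i B A HB HA) as E.
    destruct (subst_atom_eq_nth _ _ _ _ _ (eq_sym E) Hk) as (r & Hr & _).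
    apply nth_error_In in HA.
    split; intros Hx; exists r; split; auto;
      destruct (term_trichotomy r) as [Hv|[Hc|Hc]]; auto.
    + exfalso. destruct Hv as [y ->]. exact (top_var_not_matched_by_var sigma As Hflat A B Di k x y HA
                        (HLG i B Di HB HDi) (Hgc i B Di HB HDi) E Hx Hk Hr).
    + exfalso. exact (Hx (compound_match_top_var sigma As Hflat A B Di k x r HA
                            (HLG i B Di HB HDi) E Hx0 Hk Hr Hc)).
  - intros (i & A & B & k & x & r & HA & HB & Hk & Hx & Hr & [c ->]) y Hy.
    destruct (subst_atom_eq_nth _ _ _ _ _ (Hu i B A HB HA) Hr) as (a & Ha & Ea).
    rewrite Hk in Ha. injection Ha as <-. simpl in Ea.
    assert (H0 : forall z, var_of_negs As z -> depth (sigma z) = 0).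
    { intros z Hz. pose proof (proj2 Hx z Hz). rewrite Ea in *. simpl in *. lia. }
    split; [apply (top_var_of_depth_ge _ _ _ x Hx Hy); rewrite Ea; simpl; lia|].
    destruct (var_of_negs_flat As y Hflat Hy) as (A' & HA' & Hy').
    destruct (In_nth_error _ _ HA') as [j Hj].
    destruct (nth_error_length_eq As Bs j A' HlenB Hj) as [B' HB'].
    destruct (nth_error_length_eq As Ds j A' HlenD Hj) as [D' HD'].
    exact (depth_zero_var_matched_const sigma As Hflat A' B' D' y HA' H0
             (Hgc j B' D' HB' HD') (Hu j B' A' HB' Hj) Hy').
Qed.
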